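(* For every integer $n\ge4$, $$D_3(n)=2A(n-3)-2A(n-1)+2A(n).$$
   Context: $A(n)$ is the number of partitions of $n$ into distinct parts. $D_3(n)$ is the number of partitions of $n$ into non-negative parts (the part $0$ is allowed) in which the smallest part appears exactly $3$ times and no other part is repeated. *)

From mathcomp Require Import all_boot all_algebra.
Set Implicit Arguments. Unset Strict Implicit. Unset Printing Implicit Defensive.

Definition is_partition (n : nat) (s : seq nat) : bool :=
  sorted geq s && (sumn s == n).

Definition distinct_partition (n : nat) (s : seq nat) : bool :=
  [&& is_partition n s, all (fun x => 0 < x) s & uniq s].

(* Partitions of n into non-negative parts (0 allowed) in which the smallest
   part appears exactly 3 times and no other part is repeated. *)
Definition D3_partition (n : nat) (s : seq nat) : bool :=
  [&& is_partition n s, s != [::],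
      count_mem (last 0 s) s == 3
    & all (fun x => (x == last 0 s) || (count_mem x s == 1)) s].

Definition has_card (P : pred (seq nat)) (k : nat) : Prop :=
  exists l : seq (seq nat), [/\ uniq l, forall s, (s \in l) = P s & size l = k].

Definition A_card (n k : nat) : Prop := has_card (distinct_partition n) k.

Definition D3_card (n k : nat) : Prop := has_card (D3_partition n) k.

From mathcomp Require Import all_boot all_algebra zify ring.
Import GRing.Theory Num.Theory.

(* Removing the three copies of the smallest part s of a D_3-partition of n
   leaves a partition of n - 3s into distinct parts larger than s, so
   D_3(n) = sum_s q_s(n - 3s), where q_s(m) counts the partitions of m into
   distinct parts > s; in particular A(m) = q_0(m).  Whether s + 1 is a part
   gives q_s(m) = q_(s+1)(m) + q_(s+1)(m - s - 1), which turns each summand into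
   a difference Phi_s - Phi_(s+1) of an eight-term combination Phi_s of values
   of q_s (d3_phi).  The sum telescopes to Phi_0 - Phi_(n+1); here Phi_(n+1) = 0
   since q_(n+1) vanishes at n, n-1, n-2, n-3 (this is where n >= 4 is needed)
   and at negative arguments, while Phi_0 = 2A(n) - 2A(n-1) + 2A(n-3). *)

Lemma mem_leq_sumn (p : seq nat) x : x \in p -> x <= sumn p.
Proof.
elim: p => //= y p IHp; rewrite inE => /predU1P [-> | /IHp]; first exact: leq_addr.
by move/leq_trans; apply; rewrite leq_addl.
Qed.

Definition strict_above (s m : nat) (p : seq nat) : bool := path ltn s p && (sumn p == m).

Fixpoint enum_strict (k s m : nat) : seq (seq nat) :=
  if k is k'.+1 then
    enum_strict k' s.+1 m ++
      (if s.+1 <= m then map (cons s.+1) (enum_strict k' s.+1 (m - s.+1)) else [::])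
  else if m == 0 then [:: [::]] else [::].

Lemma mem_enum_strict k s m p :
  (p \in enum_strict k s m) = [&& path ltn s p, all (leq^~ (s + k)) p & sumn p == m].
Proof.
elim: k s m p => [|k IHk] s m [|x p] /=.
- by case: m => [|m]; rewrite ?inE.
- by rewrite addn0; case: (m == 0); case: ltnP; rewrite /= ?inE ?andbF.
- rewrite mem_cat IHk /= eq_sym orbC; case: ifP => //= _.
  by case: mapP => // -[].
have mem_cons_map L : (x :: p \in (if s.+1 <= m then map (cons s.+1) L else [::]))
    = [&& s.+1 <= m, x == s.+1 & p \in L].
  case: ifP => //= _; apply/mapP/andP => [[q q_L [-> ->]] | [/eqP -> p_L]].
    by rewrite eqxx.
  by exists p.
rewrite mem_cat mem_cons_map !IHk /= addSnnS.
case: (ltngtP x s.+1) => [_|_|->] /=.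
- by rewrite andbF.
- by rewrite andbF orbF.
have -> : (s.+1 + sumn p == m) = (s < m) && (sumn p == m - s.+1) by lia.
by rewrite addnS ltnS leq_addr; case: (s < m); rewrite /= ?andbF.
Qed.

Lemma mem_enum_strict_large k s m p :
  m <= s + k -> (p \in enum_strict k s m) = strict_above s m p.
Proof.
move=> le_m; rewrite mem_enum_strict /strict_above.
case: eqP => [sum_p | _]; rewrite ?andbF // !andbT; apply/andb_idr => _.
by apply/allP => x /mem_leq_sumn; rewrite sum_p => /leq_trans; apply.
Qed.

Lemma uniq_enum_strict k s m : uniq (enum_strict k s m).
Proof.
elim: k s m => [|k IHk] s m /=; first by case: (m == 0).
rewrite cat_uniq IHk; case: ifP => //= _.
rewrite map_inj_uniq ?IHk ?andbT; last by move=> p q [].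
by apply/hasPn => _ /mapP [q _ ->]; rewrite mem_enum_strict /= ltnn.
Qed.

Definition strict_parts (s m : nat) : seq (seq nat) := enum_strict m s m.

Definition qcount (s m : nat) : nat := size (strict_parts s m).

Lemma mem_strict_parts s m p : (p \in strict_parts s m) = strict_above s m p.
Proof. exact/mem_enum_strict_large/leq_addl. Qed.

Lemma size_enum_strict k s m : m <= s + k -> size (enum_strict k s m) = qcount s m.
Proof.
move=> le_m; apply/perm_size/uniq_perm; rewrite ?uniq_enum_strict // => p.
by rewrite mem_strict_parts mem_enum_strict_large.
Qed.

Lemma qcountS s m :
  qcount s m = qcount s.+1 m + (if s < m then qcount s.+1 (m - s.+1) else 0).
Proof.
rewrite -(@size_enum_strict m.+1) /= ?size_cat ?size_enum_strict; try lia.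
by case: ifP => // lt_sm; rewrite size_map size_enum_strict //; lia.
Qed.

Lemma qcount_small s m : 0 < m <= s -> qcount s m = 0.
Proof.
case/andP => m_gt0 le_ms; rewrite /qcount.
case: (strict_parts s m) (mem_strict_parts s m) => // p l /(_ p).
rewrite mem_head /strict_above => /esym /andP [].
case: p => [|x p] /=; first by rewrite eq_sym gtn_eqF.
case/andP => lt_sx _ /eqP sum_p; have := mem_leq_sumn _ _ (mem_head x p).
by rewrite /= sum_p leqNgt (leq_ltn_trans le_ms lt_sx).
Qed.

Lemma strict_above0_rev m t : strict_above 0 m (rev t) = distinct_partition m t.
Proof.
rewrite /strict_above /distinct_partition /is_partition (path_sortedE ltn_trans).
rewrite ltn_sorted_uniq_leq rev_sorted rev_uniq all_rev sumn_rev.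
rewrite andbC; apply/and4P/and3P => [[-> -> -> ->] | [/andP [-> ->] -> ->]] //.
Qed.

Lemma A_card_qcount m : A_card m (qcount 0 m).
Proof.
exists (map rev (strict_parts 0 m)); split; last exact: size_map.
  by rewrite (map_inj_uniq (can_inj revK)) uniq_enum_strict.
move=> t; rewrite -{1}(revK t) (mem_map (can_inj revK)).
by rewrite mem_strict_parts strict_above0_rev.
Qed.

Lemma D3_partition_rev s p :
  path ltn s p -> D3_partition (3 * s + sumn p) (rev [:: s, s, s & p]).
Proof.
rewrite (path_sortedE ltn_trans) => /andP [gt_s lt_p].
have s_notin_p : s \notin p by apply/negP => /(allP gt_s); rewrite ltnn.
have uniq_p : uniq p := sorted_uniq ltn_trans ltnn lt_p.
have le_sp : sorted leq [:: s, s, s & p].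
  rewrite /= leqnn (path_sortedE leq_trans) (sub_sorted ltnW lt_p) andbT.
  by apply/allP => x /(allP gt_s)/ltnW.
rewrite /D3_partition /is_partition rev_sorted le_sp sumn_rev rev_cons last_rcons.
rewrite -rev_cons -size_eq0 size_rev count_rev all_rev /= eqxx (count_memPn s_notin_p).
have -> : s + (s + (s + sumn p)) = 3 * s + sumn p by lia.
rewrite eqxx /=; apply/allP => x x_p; rewrite count_rev /= (count_uniq_mem _ uniq_p) x_p.
by rewrite (ltn_eqF (allP gt_s x x_p)) orbC.
Qed.

Lemma sorted_leq_head_nseq s v :
  sorted leq (s :: v) -> s :: v = nseq (count_mem s (s :: v)) s ++ [seq x <- v | x != s].
Proof.
elim: v => [|y w IHw] /= => [_ | /andP [le_sy sorted_yw]]; first by rewrite eqxx.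
case: (ltngtP s y) le_sy sorted_yw => // [lt_sy _ | <- _] sorted_w; last first.
  by rewrite eqxx /= [s :: w]IHw //= eqxx.
have gt_w : all (ltn s) w.
  by apply/allP => x /(allP (order_path_min leq_trans sorted_w)); apply: leq_trans.
have s_notin_w : s \notin w by apply/negP => /(allP gt_w) /=; rewrite ltnn.
have /all_filterP -> : all (predC1 s) w by apply: sub_all gt_w => x /gtn_eqF /= ->.
by rewrite eqxx (count_memPn s_notin_w).
Qed.

Lemma D3_partitionP n t :
  D3_partition n t ->
  exists2 p, path ltn (last 0 t) p & t = rev [:: last 0 t, last 0 t, last 0 t & p].
Proof.
case/lastP: t => [|t' s]; first by case/and4P.
rewrite /D3_partition last_rcons -[rcons t' s]revK rev_rcons.
move: (rev t') => v /and4P [/andP [sorted_t _] _ /eqP + all_t].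
rewrite count_rev => count3; have sorted_u : sorted leq (s :: v) by rewrite -rev_sorted.
have def_u := sorted_leq_head_nseq _ _ sorted_u; rewrite count3 in def_u.
set p := [seq x <- v | x != s] in def_u.
exists p; last by rewrite [s :: v]def_u.
have p_v x : x \in p -> (x != s) && (x \in v) by rewrite mem_filter.
have uniq_p : uniq p.
  apply: count_mem_uniq => x; case: (boolP (x \in p)) => [x_p | /count_memPn //].
  have /andP [x_ne_s x_v] := p_v x x_p.
  have := allP all_t x; rewrite mem_rev inE x_v orbT (negbTE x_ne_s) count_rev def_u /=.
  by rewrite [s == x]eq_sym (negbTE x_ne_s) => /(_ isT) /eqP.
rewrite (path_sortedE ltn_trans) ltn_sorted_uniq_leq uniq_p.
apply/and3P; split=> //.
  apply/allP => x /p_v /andP [x_ne_s x_v] /=.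
  by rewrite ltn_neqAle eq_sym x_ne_s (allP (order_path_min leq_trans sorted_u) x x_v).
exact: (sorted_filter leq_trans _ (path_sorted (sorted_u : path leq s v))).
Qed.

Definition d3_parts (n : nat) : seq (seq nat) :=
  [seq rev [:: s, s, s & p] | s <- [seq s <- iota 0 n.+1 | 3 * s <= n],
                               p <- strict_parts s (n - 3 * s)].

Lemma uniq_d3_parts n : uniq (d3_parts n).
Proof.
apply: allpairs_uniq_dep => [|s _|]; rewrite ?filter_uniq ?iota_uniq ?uniq_enum_strict //.
by move=> [s p] [s' p'] _ _ /(can_inj revK) /= [-> _ _ ->].
Qed.

Lemma mem_d3_parts n t : (t \in d3_parts n) = D3_partition n t.
Proof.
apply/allpairsPdep/idP => [[s [p [s_in p_in ->]]] | D3t].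
  move: s_in p_in; rewrite mem_filter mem_strict_parts.
  move=> /andP [le_3s _] /andP [path_p /eqP sum_p].
  by have := D3_partition_rev _ _ path_p; rewrite sum_p subnKC.
have [p path_p def_t] := D3_partitionP _ _ D3t.
have sum_t : 3 * last 0 t + sumn p = n.
  by case/and4P: D3t => /andP [_ /eqP <-] _ _ _; rewrite [in RHS]def_t sumn_rev /=; lia.
exists (last 0 t), p; split=> //.
  by rewrite mem_filter mem_iota; apply/andP; split; lia.
by rewrite mem_strict_parts /strict_above path_p -sum_t addKn eqxx.
Qed.

Lemma size_d3_parts n :
  size (d3_parts n) = \sum_(0 <= s < n.+1 | 3 * s <= n) qcount s (n - 3 * s).
Proof. by rewrite size_allpairs_dep sumnE big_map big_filter. Qed.

Section SignedCounts.
Local Open Scope ring_scope.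

Definition qcountz (s : nat) (z : int) : int :=
  if z is Posz m then (qcount s m)%:Z else 0.

Lemma qcountz_nat s (m : nat) : qcountz s m%:Z = (qcount s m)%:Z.
Proof. by []. Qed.

Lemma qcountz_neg s z : z < 0 -> qcountz s z = 0.
Proof. by case: z. Qed.

Lemma qcountz_eq0 s z : z != 0 -> z <= s%:Z -> qcountz s z = 0.
Proof.
case: z => [m|m] // m_neq0 le_ms; rewrite qcountz_nat qcount_small //.
by rewrite lt0n -lez_nat le_ms andbT; move: m_neq0; rewrite eqz_nat.
Qed.

Lemma qcountzS s z : qcountz s z = qcountz s.+1 z + qcountz s.+1 (z - s.+1%:Z).
Proof.
case: z => [m|m]; last by rewrite !qcountz_neg ?addr0 //; lia.
rewrite qcountz_nat qcountS PoszD; case: ltnP => [lt_sm | le_ms].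
  by rewrite subzn.
by rewrite [qcountz _ (_ - _)]qcountz_neg ?addr0 // subr_lt0 ltz_nat ltnS.
Qed.

Definition d3_phi (f : int -> int) (S n : int) : int :=
  f n - f (n - 1) - f (n - 2) + f (n - 3) - f (n - 1 - S) + f (n - 3 - S)
  + f (n - 2 - 2 * S) + f (n - 3 * S).

Lemma d3_phi_step (g h : int -> int) (S n : int) :
  (forall z, h z = g z + g (z - (S + 1))) ->
  d3_phi h S n - d3_phi g (S + 1) n = h (n - 3 * S).
Proof.
move=> def_h; rewrite /d3_phi !def_h.
have -> : n - (S + 1) = n - 1 - S by ring.
have -> : n - 2 - (S + 1) = n - 3 - S by ring.
have -> : n - 1 - S - (S + 1) = n - 2 - 2 * S by ring.
have -> : n - 3 - S - (S + 1) = n - 2 - 2 * (S + 1) by ring.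
have -> : n - 2 - 2 * S - (S + 1) = n - 3 * (S + 1) by ring.
ring.
Qed.

Lemma sum_qcountz (n : int) (N : nat) :
  \sum_(0 <= s < N) qcountz s (n - 3 * s%:Z)
  = d3_phi (qcountz 0) 0 n - d3_phi (qcountz N) N%:Z n.
Proof.
rewrite (telescope_sumr_eq (fun s : nat => - d3_phi (qcountz s) s%:Z n)) // => [|s _].
  by rewrite opprK addrC.
rewrite opprK [RHS]addrC -[s.+1]addn1 PoszD d3_phi_step // => z.
by rewrite addn1 qcountzS -addn1 PoszD.
Qed.

Lemma size_d3_partsz n :
  (size (d3_parts n))%:Z = \sum_(0 <= s < n.+1) qcountz s (n%:Z - 3 * s%:Z).
Proof.
rewrite size_d3_parts -natz natr_sum big_mkcond /=; apply: eq_bigr => s _.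
case: leqP => [le_3s | lt_n3s]; first by rewrite natz -PoszM subzn.
by rewrite qcountz_neg // -PoszM subr_lt0 ltz_nat.
Qed.

Lemma d3_phi_qcount0 n : (3 <= n)%N ->
  d3_phi (qcountz 0) 0 n%:Z
  = 2 * (qcount 0 (n - 3))%:Z - 2 * (qcount 0 (n - 1))%:Z + 2 * (qcount 0 n)%:Z.
Proof.
move=> le_3n; rewrite /d3_phi !(mulr0, subr0).
have qcountz_sub k : (k <= n)%N -> qcountz 0 (n%:Z - k%:Z) = (qcount 0 (n - k))%:Z.
  by move=> le_kn; rewrite subzn.
rewrite qcountz_nat !(qcountz_sub 1, qcountz_sub 2, qcountz_sub 3) //.
- ring.
- exact: leq_trans le_3n.
- exact: leq_trans le_3n.
Qed.

Lemma d3_phi_qcount_vanish n : (4 <= n)%N -> d3_phi (qcountz n.+1) n.+1%:Z n%:Z = 0.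
Proof.
move=> le_4n; rewrite /d3_phi !qcountz_eq0 ?(addr0, subr0) //; lia.
Qed.

End SignedCounts.

Theorem corollary13 (n : nat) (hn : 4 <= n) :
  exists a0 a1 a3 d : nat,
    [/\ A_card n a0, A_card (n - 1) a1, A_card (n - 3) a3, D3_card n d
      & (d%:Z = 2 * a3%:Z - 2 * a1%:Z + 2 * a0%:Z)%R].
Proof.
exists (qcount 0 n), (qcount 0 (n - 1)), (qcount 0 (n - 3)), (size (d3_parts n)).
split; try exact: A_card_qcount.
  by exists (d3_parts n); split; [exact: uniq_d3_parts | exact: mem_d3_parts |].
rewrite size_d3_partsz sum_qcountz d3_phi_qcount_vanish // subr0.
exact: d3_phi_qcount0 (ltnW hn).
Qed.
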